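(* Let $Q$ be a rational function with distinct poles $z_1,\dotsc,z_d$ ($d\ge1$) of orders $r_1,\dotsc,r_d$. Put $P=\prod_{i=1}^d(z-z_i)^{r_i}$ and $P_0=\prod_{i=1}^d(z-z_i)$, and for each $n\ge1$ write $Q^{(n)}=\frac{\alpha_nR_n}{PP_0^n}$ with $\alpha_n\in\mathbb{C}$ and $R_n\in\mathbb{C}[z]$ monic. Then $\lim_{n\to\infty}\frac{\deg R_n}{n}=d-1$. *)

(* complex numbers are R[i] (mathcomp-real-closed) over an
   arbitrary real type R (a model of the reals), rational functions are the
   fraction field {fraction {poly R[i]}}. *)
From HB Require Import structures.
From mathcomp Require Import all_boot all_order all_algebra.
From mathcomp Require Import fraction.
From mathcomp.real_closed Require Import complex.
From mathcomp Require Import all_classical all_reals all_analysis.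

Set Implicit Arguments.
Unset Strict Implicit.
Unset Printing Implicit Defensive.

Import Order.TTheory GRing.Theory Num.Theory.
Local Open Scope ring_scope.

Notation "x %:F" := (@FracField.tofrac _ x) : ring_scope.

(* Derivative of a rational function N/D, computed on a representative by the
   quotient rule: (N/D)' = (N' D - N D') / D^2.  (This does not depend on the
   chosen representative.) *)
Definition frac_deriv (F : fieldType) (x : {fraction {poly F}})
  : {fraction {poly F}} :=
  let N := (frac (repr x)).1 in
  let D := (frac (repr x)).2 in
  (N^`() * D - N * D^`())%:F / (D ^+ 2)%:F.

Definition frac_derivn (F : fieldType) (n : nat) (x : {fraction {poly F}}) :=
  iter n (@frac_deriv F) x.

From HB Require Import structures.
From mathcomp Require Import all_boot all_order all_algebra.
From mathcomp Require Import fraction.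
From mathcomp.real_closed Require Import complex.
From mathcomp Require Import all_classical all_reals all_analysis.
From mathcomp Require Import generic_quotient ring zify.
Import Order.TTheory GRing.Theory Num.Theory numFieldNormedType.Exports.
Local Open Scope classical_set_scope.
Local Open Scope ring_scope.

(* With [P^`() * P0 = P * T], the n-th derivative of [A / P] is
   [N_n / (P * P0 ^+ n)] with [N_(n+1) = P0 * N_n^`() - (T + n P0^`()) * N_n].
   As [P0] is monic of degree [d] and [T] has degree [d - 1] with leading
   coefficient [deg P], the degree of [N_n] grows by exactly [d - 1] unless
   [deg N_n = deg P + n d], where the leading terms may cancel.  No [N_n]
   vanishes, because its value at a pole is a nonzero multiple of the value of
   [A] there.  Since [deg N_n <= deg A + n (d - 1)] eventually stays below
   [deg P + n d], [deg N_n] is eventually affine in [n] with slope [d - 1]. *)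

Set Implicit Arguments.
Unset Strict Implicit.
Unset Printing Implicit Defensive.

Lemma frac_repr (F : idomainType) (x : {fraction F}) :
  x = ((frac (repr x)).1)%:F / ((frac (repr x)).2)%:F.
Proof.
have d0 := denom_ratioP (repr x).
apply: (mulIf (x := ((frac (repr x)).2)%:F)); first by rewrite tofrac_eq0.
rewrite divfK ?tofrac_eq0 // -[X in X * _ = _]reprK.
unlock FracField.tofrac; rewrite !piE.
apply/eqmodP; rewrite /= FracField.equivfE /FracField.mulf.
by rewrite !numden_Ratio ?mulf_neq0 ?oner_eq0 // !mulr1 mulrC.
Qed.

Lemma eq_tofrac_div (F : idomainType) (a b c e : F) : b != 0 -> e != 0 ->
  (a%:F / b%:F = c%:F / e%:F) <-> a * e = c * b.
Proof.
move=> b0 e0; split => [/eqP | eq_ae].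
  by rewrite eqr_div ?tofrac_eq0 // -!tofracM tofrac_eq => /eqP.
by apply/eqP; rewrite eqr_div ?tofrac_eq0 // -!tofracM eq_ae.
Qed.

Lemma frac_deriv_div (F : fieldType) (N D : {poly F}) : D != 0 ->
  frac_deriv (N%:F / D%:F) = (N^`() * D - N * D^`())%:F / (D ^+ 2)%:F.
Proof.
move=> D_neq0; rewrite /frac_deriv.
move: (denom_ratioP (repr (N%:F / D%:F))) (frac_repr (N%:F / D%:F)).
move: (frac _).1 (frac _).2 => N1 D1 D1_neq0 /esym /(eq_tofrac_div _ _ D1_neq0 D_neq0) eq1.
have eq1' : N1^`() * D + N1 * D^`() = N^`() * D1 + N * D1^`() by rewrite -!derivM eq1.
apply/eq_tofrac_div; rewrite ?expf_neq0 //.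
apply/eqP; rewrite -subr_eq0; apply/eqP.
(* The cross difference is a combination of [N1 * D - N * D1] and its derivative. *)
transitivity (D1 * D * (N1^`() * D + N1 * D^`() - (N^`() * D1 + N * D1^`()))
   - (D1^`() * D + D1 * D^`()) * (N1 * D - N * D1)); first by ring.
by rewrite eq1' eq1 !addrN !mulr0 subrr.
Qed.

Lemma mul_derivX (R : comNzRingType) (p : {poly R}) n :
  (p ^+ n)^`() * p = p ^+ n * (p^`() *+ n).
Proof.
rewrite deriv_exp; case: n => [|n]; first by rewrite !mulr0n mul0r mulr0.
by rewrite mulrnAl mulrnAr -mulrA -exprSr mulrC.
Qed.

Lemma logderiv_prod_exp (R : comNzRingType) (I : Type) (s : seq I)
    (g : I -> {poly R}) (r : I -> nat) :
  exists T, (\prod_(i <- s) g i ^+ r i)^`() * \prod_(i <- s) g i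
            = (\prod_(i <- s) g i ^+ r i) * T.
Proof.
elim: s => [|x s [T IH]]; first by exists 0; rewrite !big_nil derivC mul0r mulr0.
exists ((g x)^`() *+ r x * \prod_(i <- s) g i + g x * T).
rewrite !big_cons derivM mulrDl.
transitivity (((g x ^+ r x)^`() * g x) * \prod_(i <- s) g i ^+ r i * \prod_(i <- s) g i
  + g x ^+ r x * g x * ((\prod_(i <- s) g i ^+ r i)^`() * \prod_(i <- s) g i)); first by ring.
by rewrite mul_derivX IH; ring.
Qed.

Lemma coefM_top (R : idomainType) (a b : {poly R}) i j :
  (size a <= i.+1)%N -> (size b <= j.+1)%N -> (a * b)`_(i + j) = a`_i * b`_j.
Proof.
move=> sa sb.
have sab := size_polyMleq a b.
have [lt_a|] := ltnP (size a) i.+1.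
  by rewrite [a`_i]nth_default // mul0r nth_default //; apply: (leq_trans sab); lia.
have [lt_b|] := ltnP (size b) j.+1.
  by rewrite [b`_j]nth_default // mulr0 nth_default //; apply: (leq_trans sab); lia.
move=> ge_b ge_a.
have ea : size a = i.+1 by apply/eqP; rewrite eqn_leq sa ge_a.
have eb : size b = j.+1 by apply/eqP; rewrite eqn_leq sb ge_b.
have a0 : a != 0 by rewrite -size_poly_eq0 ea.
have b0 : b != 0 by rewrite -size_poly_eq0 eb.
by have := lead_coefM a b; rewrite /lead_coef size_mul // ea eb addSn addnS.
Qed.

Lemma logderiv_size_coef (R : idomainType) (P P0 T : {poly R}) e :
  P \is monic -> P0 \is monic -> size P0 = e.+2 -> P^`() * P0 = P * T ->
  (size T <= e.+1)%N /\ T`_e = ((size P).-1)%:R.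
Proof.
move=> mP mP0 sP0 PT.
have P_neq0 := monic_neq0 mP.
have [p sP] : exists p, size P = p.+1.
  by exists (size P).-1; rewrite prednK // lt0n size_poly_eq0.
have sP' := lt_size_deriv P_neq0; rewrite sP in sP'.
have lP : P`_p = 1 by have /monicP := mP; rewrite /lead_coef sP.
rewrite sP /=.
case: p sP sP' lP => [|p] sP sP' lP.
  have P'0 : P^`() = 0 by apply/eqP; rewrite -size_poly_eq0; lia.
  have /esym/eqP := PT; rewrite P'0 mul0r mulf_eq0 (negbTE P_neq0) => /eqP->.
  by rewrite size_poly0 coef0.
have sT : (size T <= e.+1)%N.
  have [->|T_neq0] := eqVneq T 0; first by rewrite size_poly0.
  have := size_polyMleq P^`() P0; rewrite PT size_monicM // sP sP0; lia.
split=> //.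
have := congr1 (fun q : {poly R} => q`_(p + e.+1)) PT.
rewrite /= coefM_top ?sP0 // addnS -addSn coefM_top ?sP //.
have lP0 : P0`_e.+1 = 1 by have /monicP := mP0; rewrite /lead_coef sP0.
by rewrite coef_deriv lP lP0 mul1r mulr1 => <-.
Qed.

Lemma tofrac_divZ_size (F : fieldType) (N q D : {poly F}) a :
  N != 0 -> D != 0 -> N%:F / D%:F = (a *: q)%:F / D%:F -> size q = size N.
Proof.
move=> N_neq0 D_neq0 /(eq_tofrac_div _ _ D_neq0 D_neq0) /(mulIf D_neq0) NE.
have a_neq0 : a != 0 by apply: contraNneq N_neq0 => a0; rewrite NE a0 scale0r.
by rewrite NE size_scale.
Qed.

Fixpoint deriv_numer (R : nzRingType) (P0 T A : {poly R}) (n : nat) : {poly R} :=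
  if n is m.+1 then
    P0 * (deriv_numer P0 T A m)^`() - (T + P0^`() *+ m) * deriv_numer P0 T A m
  else A.

Lemma frac_derivn_div (F : fieldType) (P P0 T A : {poly F}) n :
  P != 0 -> P0 != 0 -> P^`() * P0 = P * T ->
  frac_derivn n (A%:F / P%:F) = (deriv_numer P0 T A n)%:F / (P * P0 ^+ n)%:F.
Proof.
move=> P_neq0 P0_neq0 PT; elim: n => [|n IH]; first by rewrite /= expr0 mulr1.
rewrite /frac_derivn iterS -/(frac_derivn n _) IH.
set D := P * P0 ^+ n; set N := deriv_numer P0 T A n.
have D_neq0 : D != 0 by rewrite mulf_neq0 ?expf_neq0.
have D'P0 : D^`() * P0 = D * (T + P0^`() *+ n).
  rewrite /D derivM mulrDl.
  transitivity (P^`() * P0 * P0 ^+ n + P * ((P0 ^+ n)^`() * P0)); first by ring.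
  by rewrite PT mul_derivX; ring.
rewrite frac_deriv_div //; apply/eq_tofrac_div; rewrite ?mulf_neq0 ?expf_neq0 //=.
rewrite -/N exprSr mulrA -/D.
transitivity (N^`() * D * D * P0 - N * D * (D^`() * P0)); first by ring.
by rewrite D'P0; ring.
Qed.

Section DerivNumerDegree.

Variables (R : idomainType) (P0 T A : {poly R}) (e p : nat).
Hypotheses (P0_monic : P0 \is monic) (size_P0 : size P0 = e.+2).
Hypotheses (size_T : (size T <= e.+1)%N) (coef_T : T`_e = p%:R).

Local Notation N := (deriv_numer P0 T A).

Lemma deriv_numerS_top n : N n != 0 ->
  let m := (size (N n)).-1 in
  (size (N n.+1) <= (m + e).+1)%N /\
  (N n.+1)`_(m + e) = lead_coef (N n) * (m%:R - (p + n * e.+1)%:R).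
Proof.
move=> N_neq0 m.
have sN : size (N n) = m.+1 by rewrite /m prednK // lt0n size_poly_eq0.
clearbody m.
have sN' : (size (N n)^`() <= m)%N by rewrite -ltnS -sN lt_size_deriv.
have P0_neq0 := monic_neq0 P0_monic.
have sP0' : (size P0^`() <= e.+1)%N by rewrite -ltnS -size_P0 lt_size_deriv.
have sW : (size (T + P0^`() *+ n)%R <= e.+1)%N.
  rewrite (leq_trans (size_polyD _ _)) // geq_max size_T -scaler_nat.
  exact: leq_trans (size_scale_leq _ _) sP0'.
have lP0 : P0`_e.+1 = 1 by have /monicP := P0_monic; rewrite /lead_coef size_P0.
split.
  rewrite /= (leq_trans (size_polyD _ _)) // size_polyN geq_max.
  apply/andP; split; apply: (leq_trans (size_polyMleq _ _)).
    by rewrite size_P0 addSn /= addSn ltnS addnC leq_add2r.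
  by rewrite sN addnS /= addnC -addnS leq_add2l.
rewrite /= coefB.
have -> : (P0 * (N n)^`())`_(m + e) = (N n)`_m *+ m.
  case: m sN sN' => [|m] sN sN'.
    have -> : (N n)^`() = 0 by apply/eqP; rewrite -size_poly_eq0; lia.
    by rewrite mulr0 coef0 mulr0n.
  by rewrite addSnnS addnC coefM_top ?size_P0 // coef_deriv lP0 mul1r.
rewrite addnC coefM_top ?sN // coefD coefMn coef_deriv lP0 coef_T.
by rewrite /lead_coef sN /= natrD natrM; ring.
Qed.

Lemma deg_deriv_numerS_le n : N n != 0 ->
  ((size (N n.+1)).-1 <= (size (N n)).-1 + e)%N.
Proof. by move=> /deriv_numerS_top[+ _]; lia. Qed.

Lemma deg_deriv_numerS n : N n != 0 ->
  ((size (N n)).-1)%:R != (p + n * e.+1)%:R :> R ->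
  (size (N n.+1)).-1 = ((size (N n)).-1 + e)%N.
Proof.
move=> N_neq0 deg_neq; have [size_le top] := deriv_numerS_top N_neq0.
have top_neq0 : (N n.+1)`_((size (N n)).-1 + e) != 0.
  by rewrite top mulf_neq0 ?lead_coef_eq0 // subr_eq0.
have size_gt : ((size (N n)).-1 + e < size (N n.+1))%N.
  by rewrite ltnNge; apply: contra top_neq0 => /(nth_default 0) ->.
suff -> : size (N n.+1) = ((size (N n)).-1 + e).+1 by [].
by apply/eqP; rewrite eqn_leq size_le size_gt.
Qed.

End DerivNumerDegree.

Lemma horner_logderiv_root (R : idomainType) (P P0 T U V : {poly R}) c k :
  P = ('X - c%:P) ^+ k * U -> P0 = ('X - c%:P) * V -> P^`() * P0 = P * T ->
  U.[c] != 0 -> T.[c] = V.[c] *+ k.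
Proof.
move=> eP eP0 PT Uc_neq0.
have gk_neq0 : ('X - c%:P) ^+ k != 0 by rewrite expf_neq0 // polyXsubC_eq0.
have UT : U * T = (U *+ k + U^`() * ('X - c%:P)) * V.
  apply: (mulfI gk_neq0); rewrite mulrA -eP -PT eP eP0 derivM.
  transitivity (((('X - c%:P) ^+ k)^`() * ('X - c%:P)) * U * V
    + ('X - c%:P) ^+ k * U^`() * ('X - c%:P) * V); first by ring.
  by rewrite mul_derivX derivXsubC; ring.
apply: (mulfI Uc_neq0); move/(congr1 (horner^~ c)): UT.
rewrite !hornerE subrr mulr0 addr0 => ->.
by rewrite hornerMn mulrnAl mulrnAr.
Qed.

Lemma horner_deriv_numer_neq0 (R : numDomainType) (P0 T A : {poly R}) c k :
  P0.[c] = 0 -> T.[c] = P0^`().[c] *+ k -> (0 < k)%N -> P0^`().[c] != 0 ->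
  A.[c] != 0 -> forall n, (deriv_numer P0 T A n).[c] != 0.
Proof.
move=> P0c Tc k_gt0 P0'c_neq0 Ac_neq0; elim=> [|n IH] //=.
rewrite hornerD hornerN !hornerM P0c mul0r add0r oppr_eq0 hornerD hornerMn Tc.
rewrite -mulrnDr mulf_neq0 // mulrn_eq0 negb_or P0'c_neq0 andbT addn_eq0.
by rewrite negb_and -lt0n k_gt0.
Qed.

Section ProdRoot.

Variables (R : numDomainType) (I : finType) (z : I -> R) (r : I -> nat).
Hypothesis z_inj : injective z.

Let P := \prod_j ('X - (z j)%:P) ^+ r j.
Let P0 := \prod_j ('X - (z j)%:P).

Lemma deriv_numer_prod_neq0 (T A : {poly R}) i :
  (0 < r i)%N -> A.[z i] != 0 -> P^`() * P0 = P * T ->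
  forall n, deriv_numer P0 T A n != 0.
Proof.
move=> ri_gt0 Azi_neq0 PT n.
set U := \prod_(j | j != i) ('X - (z j)%:P) ^+ r j.
set V := \prod_(j | j != i) ('X - (z j)%:P).
have eP : P = ('X - (z i)%:P) ^+ r i * U by rewrite /P (bigD1 i).
have eP0 : P0 = ('X - (z i)%:P) * V by rewrite /P0 (bigD1 i).
have zij_neq0 j : j != i -> z i - z j != 0 by rewrite subr_eq0 (inj_eq z_inj) eq_sym.
have Uzi_neq0 : U.[z i] != 0.
  by rewrite horner_prod; apply/prodf_neq0 => j ne_ji; rewrite !hornerE expf_neq0 ?zij_neq0.
have Vzi_neq0 : V.[z i] != 0.
  by rewrite horner_prod; apply/prodf_neq0 => j ne_ji; rewrite !hornerE zij_neq0.
have P0'zi : P0^`().[z i] = V.[z i].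
  by rewrite eP0 derivM derivXsubC !hornerE subrr mul0r addr0.
have P0zi : P0.[z i] = 0 by rewrite eP0 !hornerE subrr mul0r.
have Tzi : T.[z i] = P0^`().[z i] *+ r i.
  by rewrite P0'zi (horner_logderiv_root eP eP0 PT Uzi_neq0).
rewrite -P0'zi in Vzi_neq0.
have := horner_deriv_numer_neq0 P0zi Tzi ri_gt0 Vzi_neq0 Azi_neq0 n.
by apply: contraNneq => ->; rewrite horner0.
Qed.

End ProdRoot.

(* Once [n > f 0], the bound [f n <= f 0 + n * e] keeps [f n] below the
   exceptional value [p + n * e.+1], and the gap only widens. *)
Lemma eventually_affine (f : nat -> nat) (p e : nat) :
  (forall n, f n.+1 <= f n + e)%N ->
  (forall n, f n != (p + n * e.+1)%N -> f n.+1 = (f n + e)%N) ->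
  exists n0 C, forall k, f (k + n0.+1)%N = (C + k * e)%N.
Proof.
move=> f_le f_eq.
have f_bound n : (f n <= f 0 + n * e)%N.
  by elim: n => [|n IH]; [rewrite addn0 | have := f_le n; lia].
exists (f 0%N), (f (f 0%N).+1).
have : (f (f 0%N).+1 < p + (f 0%N).+1 * e.+1)%N by have := f_bound (f 0%N).+1; nia.
move: (f 0%N).+1 => n0 lt_n0; clear f_le f_bound.
suff H k : (f (k + n0) < p + (k + n0) * e.+1)%N /\ f (k + n0) = (f n0 + k * e)%N.
  by move=> k; case: (H k).
elim: k => [|k [lt_k eq_k]]; first by rewrite add0n mul0n addn0.
rewrite addSn f_eq; last by rewrite neq_ltn lt_k.
by split; [nia | rewrite eq_k mulSnr addnA].
Qed.

Lemma eventually_affine_cvg (R : archiRealFieldType) (u : R ^nat) n0 (c e : R) :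
  (forall k, u (k + n0.+1)%N = c + k%:R * e) ->
  (fun n => u n / n%:R) @ \oo --> e.
Proof.
move=> uE; rewrite -(cvg_shiftn n0.+1).
have -> : [sequence u (k + n0.+1)%N / (k + n0.+1)%:R]_k
    = (fun k => e + (c - n0.+1%:R * e) * harmonic (k + n0)%N).
  apply/funext => k; rewrite /= uE /harmonic /= -addnS.
  by field; rewrite nat1r -natrD pnatr_eq0 addnS.
have harmonic_shift : harmonic (k + n0)%N @[k --> \oo] --> (0 : R).
  by rewrite (cvg_shiftn n0 (@harmonic R)); exact: cvg_harmonic.
apply: cvg_trans (cvgD (cvg_cst e) (cvgMl_tmp (a := c - n0.+1%:R * e) harmonic_shift)) _.
by rewrite mulr0 addr0.
Qed.

Unset Implicit Arguments.

Theorem lemma4p2 (R : realType) (d : nat) (z : 'I_d -> R[i]) (r : 'I_d -> nat)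
  (A : {poly R[i]}) (alpha : nat -> R[i]) (Rn : nat -> {poly R[i]}) :
  (0 < d)%N ->
  injective z ->
  (forall i, (0 < r i)%N) ->
  (forall i, A.[z i] != 0) ->
  let P := \prod_(i < d) ('X - (z i)%:P) ^+ r i in
  let P0 := \prod_(i < d) ('X - (z i)%:P) in
  let Q := A%:F / P%:F in
  (forall n, (1 <= n)%N ->
     Rn n \is monic /\
     frac_derivn n Q = (alpha n *: Rn n)%:F / (P * P0 ^+ n)%:F) ->
  let degR_over_n : R ^nat := fun n => ((size (Rn n)).-1)%:R / n%:R in
  degR_over_n @ \oo --> (d%:R - 1 : R).
Proof.
move=> d_gt0 z_inj r_gt0 Az P P0 Q RnE degR_over_n.
have [T PT] : exists T, P^`() * P0 = P * T := logderiv_prod_exp _ _ r.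
have [e ed] : exists e, d = e.+1 by exists d.-1; rewrite prednK.
subst d.
have P0_monic : P0 \is monic := monic_prod_XsubC _ _ _.
have P_monic : P \is monic by apply: monic_prod => i _; exact/monic_exp/monicXsubC.
have size_P0 : size P0 = e.+2.
  by rewrite size_prod_XsubC [index_enum _]unlock -enumT -cardT card_ord.
have [size_T coef_T] := logderiv_size_coef P_monic P0_monic size_P0 PT.
set N := deriv_numer P0 T A.
have N_neq0 n : N n != 0 := deriv_numer_prod_neq0 z_inj (r_gt0 ord0) (Az ord0) PT n.
have size_Rn n : (0 < n)%N -> size (Rn n) = size (N n).
  move=> n_gt0; have [_] := RnE n n_gt0.
  rewrite /Q (frac_derivn_div _ _ (monic_neq0 P_monic) (monic_neq0 P0_monic) PT).
  have D_neq0 : P * P0 ^+ n != 0 by rewrite mulf_neq0 ?expf_neq0 ?monic_neq0.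
  exact: tofrac_divZ_size (N_neq0 n) D_neq0.
have deg_le n := deg_deriv_numerS_le P0_monic size_P0 size_T coef_T (N_neq0 n).
have deg_eq n : (size (N n)).-1 != ((size P).-1 + n * e.+1)%N ->
    (size (N n.+1)).-1 = ((size (N n)).-1 + e)%N.
  by move=> ne; apply: (deg_deriv_numerS P0_monic size_P0 size_T coef_T); rewrite ?eqr_nat.
have [n0 [C degE]] := eventually_affine deg_le deg_eq.
have -> : (e.+1%:R - 1 : R) = e%:R by rewrite -natr1 addrK.
apply: (eventually_affine_cvg (n0 := n0) (c := C%:R)) => k.
rewrite /degR_over_n size_Rn; last by rewrite addnS.
by rewrite -natrM -natrD -degE.
Qed.
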